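(* Let $a$ be a positive integer with $\sigma(a)\neq 2a$, and let $b,c$ be coprime integers with $c>0$ and $\dfrac{b}{c}=\dfrac{a}{2a-\sigma(a)}$. Let $f$ be a positive integer coprime to $a$, and let $g,h$ be positive integers with $gh=\sigma(f)$. Put $e=bf-bgh+cgh$ and assume $e\neq 0$. Let $x,y$ be positive integers such that $p=hx-1$, $q=gy-1$, $r=xy-1$ are primes, $p\neq q$, none of $p,q,r$ divides $a$, and $\gcd(f,r)=1$. If $$(ex-bg)(ey-bh)=b^2gh+be(f-1),$$ then $apq$ and $afr$ are amicable numbers.
   Context: For a positive integer $N$, $\sigma(N)$ denotes the sum of all positive divisors of $N$. Positive integers $M,N$ are amicable if $\sigma(M)-M=N$ and $\sigma(N)-N=M$. *)

From mathcomp Require Export all_boot all_order all_algebra.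
Set Implicit Arguments. Unset Strict Implicit. Unset Printing Implicit Defensive.

Definition sigma (N : nat) : nat := \sum_(d <- divisors N) d.

(* Positive integers M, N are amicable if sigma(M) - M = N and sigma(N) - N = M.
   (Subtraction in nat is exact here since sigma N >= N for N > 0.) *)
Definition amicable (M N : nat) : Prop :=
  [/\ 0 < M, 0 < N, sigma M - M = N & sigma N - N = M]%N.

From mathcomp Require Import ring.
Import Order.TTheory GRing.Theory Num.Theory.

Set Implicit Arguments.
Unset Strict Implicit.
Unset Printing Implicit Defensive.

(* Both numbers have divisor sum sigma(a) (p+1)(q+1): for a p q by
   multiplicativity, and for a f r because sigma(f) (r+1) = g h x y = (p+1)(q+1).
   So they are amicable iff sigma(a) (p+1)(q+1) = a (p q + f r).  Cancelling e
   turns the quadratic hypothesis into e x y = b (h x + g y + f - 1), and after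
   clearing the denominator of b/c = a/(2a - sigma(a)) the amicability equation
   follows from these two relations by polynomial arithmetic. *)

Lemma gcdn_mul_dvd m n u v :
  coprime m n -> u %| m -> v %| n -> gcdn m (u * v) = u.
Proof.
move=> cmn um vn; rewrite Gauss_gcdl; first exact/gcdn_idPr.
exact: coprime_dvdr vn cmn.
Qed.

Lemma dvdn_mul_coprime_gcd m n d :
  coprime m n -> d %| m * n -> d = gcdn d m * gcdn d n.
Proof.
move=> cmn dmn; apply/eqP; rewrite eqn_dvd; apply/andP; split.
  by rewrite muln_gcdl dvdn_gcd dvdn_mulr //= muln_gcdr dvdn_gcd dvdn_mull.
rewrite Gauss_dvd ?dvdn_gcdl //.
exact: coprime_dvdl (dvdn_gcdr _ _) (coprime_dvdr (dvdn_gcdr _ _) cmn).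
Qed.

Lemma perm_divisors_mul m n : 0 < m -> 0 < n -> coprime m n ->
  perm_eq (divisors (m * n)) [seq i * j | i <- divisors m, j <- divisors n].
Proof.
move=> m0 n0 cmn; have cnm : coprime n m by rewrite coprime_sym.
apply: uniq_perm; first exact: divisors_uniq.
  apply: allpairs_uniq; [exact: divisors_uniq | exact: divisors_uniq |].
  move=> [u v] [u' v'] /allpairsP[[u1 v1] [/= um vn [-> ->]]].
  move=> /allpairsP[[u2 v2] [/= um' vn' [-> ->]]] /= E.
  rewrite -!dvdn_divisors // in um vn um' vn'.
  congr pair.
    by rewrite -(gcdn_mul_dvd cmn um vn) E (gcdn_mul_dvd cmn um' vn').
  by rewrite -(gcdn_mul_dvd cnm vn um) mulnC E mulnC (gcdn_mul_dvd cnm vn' um').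
move=> d; rewrite -dvdn_divisors ?muln_gt0 ?m0 //; apply/idP/allpairsP.
  move=> dmn; exists (gcdn d m, gcdn d n).
  by rewrite -!dvdn_divisors ?dvdn_gcdr //= -dvdn_mul_coprime_gcd.
by case=> [[u v] [/= um vn ->]]; rewrite dvdn_mul // dvdn_divisors.
Qed.

Lemma sigma_mul m n : 0 < m -> 0 < n -> coprime m n ->
  sigma (m * n) = sigma m * sigma n.
Proof.
move=> m0 n0 cmn; rewrite /sigma (perm_big _ (perm_divisors_mul m0 n0 cmn)).
by rewrite big_distrlr (big_allpairs_dep (h := muln) (F := id)).
Qed.

Lemma sigma_prime p : prime p -> sigma p = p.+1.
Proof.
move=> pp; have p_gt1 := prime_gt1 pp.
rewrite /sigma (perm_big [:: 1; p]) ?big_cons ?big_nil /= ?addn0 ?add1n //.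
apply: uniq_perm; first exact: divisors_uniq.
  by rewrite /= inE andbT neq_ltn p_gt1.
move=> d; rewrite -dvdn_divisors ?prime_gt0 // !inE.
by apply/idP/idP=> [/(primeP pp).2 //|/orP[] /eqP->]; rewrite ?dvd1n.
Qed.

Lemma sigma_mul_prime m p : 0 < m -> prime p -> ~~ (p %| m) ->
  sigma (m * p) = sigma m * p.+1.
Proof.
move=> m0 pp pm; have cmp : coprime m p by rewrite coprime_sym prime_coprime.
by rewrite sigma_mul ?(sigma_prime pp) ?(prime_gt0 pp).
Qed.

Lemma amicable_sigma M N : 0 < M -> 0 < N ->
  sigma M = M + N -> sigma N = M + N -> amicable M N.
Proof. by move=> M0 N0 sM sN; split; rewrite // ?sM ?sN ?addKn // addnC addKn. Qed.

Lemma succ_pred_prime n : prime (n - 1) -> (n - 1).+1 = n.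
Proof. by rewrite subn1; case: n. Qed.

Local Open Scope ring_scope.

Section AmicableIdentity.
Variable R : idomainType.

Lemma quadratic_condition_linear (b e F G H X Y : R) : e != 0 ->
  (e * X - b * G) * (e * Y - b * H) = b ^+ 2 * G * H + b * e * (F - 1) ->
  e * (X * Y) = b * (H * X + G * Y + F - 1).
Proof.
move=> e0 quad.
have : e * (e * (X * Y) - b * (H * X + G * Y + F - 1)) = 0.
  by rewrite -(subrr (b ^+ 2 * G * H + b * e * (F - 1))) -{1}quad; ring.
by move/eqP; rewrite mulf_eq0 (negbTE e0) subr_eq0 => /eqP.
Qed.

Lemma amicable_identity (A S B C F G H X Y : R) : C != 0 ->
  B * (2 * A - S) = C * A ->
  (B * F - B * G * H + C * G * H) * (X * Y) = B * (H * X + G * Y + F - 1) ->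
  S * (H * X) * (G * Y) = A * ((H * X - 1) * (G * Y - 1) + F * (X * Y - 1)).
Proof.
move=> C0 ratio lin; apply: (mulfI C0); apply/eqP; rewrite -subr_eq0; apply/eqP.
(* C times the difference of the two sides, as a combination of the hypotheses *)
transitivity ((B * (2 * A - S) - C * A) * ((H * X - 1) * (G * Y - 1)
    + F * (X * Y - 1) - 2 * (H * X * (G * Y)))
  - (2 * A - S) * ((B * F - B * G * H + C * G * H) * (X * Y)
    - B * (H * X + G * Y + F - 1))); first by ring.
by rewrite ratio lin !subrr mul0r mulr0 subrr.
Qed.

End AmicableIdentity.

Lemma abundancy_ratio_int (a s : nat) (b c : int) : s <> (2 * a)%N -> 0 < c ->
  (b%:~R / c%:~R : rat) = (a%:R / ((2 * a)%:R - s%:R) : rat) ->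
  b * (2 * a%:Z - s%:Z) = c * a%:Z.
Proof.
move=> s2a c0 ratio.
have c0' : (c%:~R : rat) != 0 by rewrite intr_eq0 gt_eqF.
have D0 : ((2 * a)%:R - s%:R : rat) != 0.
  by rewrite subr_eq0 eqr_nat; apply/eqP=> E; exact: s2a (esym E).
move/eqP: ratio; rewrite eqr_div // => /eqP.
rewrite !pmulrn -rmorphB -!rmorphM => /intr_inj ratio.
by rewrite [c * _]mulrC -ratio PoszM.
Qed.

Theorem mainTheorem9 (a : nat) (b c : int) (f g h x y : nat) :
  (0 < a)%N ->
  sigma a <> (2 * a)%N ->
  coprimez b c -> 0 < c ->
  (b%:~R / c%:~R : rat) = (a%:R / ((2 * a)%:R - (sigma a)%:R) : rat) ->
  (0 < f)%N -> coprime f a ->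
  (0 < g)%N -> (0 < h)%N -> (g * h)%N = sigma f ->
  let e : int := b * f%:Z - b * g%:Z * h%:Z + c * g%:Z * h%:Z in
  e != 0 ->
  (0 < x)%N -> (0 < y)%N ->
  let p := (h * x - 1)%N in
  let q := (g * y - 1)%N in
  let r := (x * y - 1)%N in
  prime p -> prime q -> prime r -> p <> q ->
  ~~ (p %| a)%N -> ~~ (q %| a)%N -> ~~ (r %| a)%N ->
  coprime f r ->
  (e * x%:Z - b * g%:Z) * (e * y%:Z - b * h%:Z)
    = b ^+ 2 * g%:Z * h%:Z + b * e * (f%:Z - 1) ->
  amicable (a * p * q)%N (a * f * r)%N.
Proof.
move=> a0 s2a _ c0 ratio f0 cfa _ _ ghf e e0 _ _ p q r pp qp rp pq pa qa ra cfr quad.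
have hx : (h * x)%N = p.+1 by rewrite succ_pred_prime.
have gy : (g * y)%N = q.+1 by rewrite succ_pred_prime.
have xy : (x * y)%N = r.+1 by rewrite succ_pred_prime.
have sum_eq : (sigma a * p.+1 * q.+1 = a * p * q + a * f * r)%N.
  have := amicable_identity (lt0r_neq0 c0) (abundancy_ratio_int s2a c0 ratio)
    (quadratic_condition_linear e0 quad).
  rewrite -!PoszM hx gy xy -[p.+1]addn1 -[q.+1]addn1 -[r.+1]addn1 !PoszD !addrK.
  by move=> E; apply/eqP; rewrite -eqz_nat E PoszD !PoszM mulrDr !mulrA eqxx.
have qap : ~~ (q %| a * p)%N.
  by rewrite Euclid_dvdM // negb_or qa dvdn_prime2 //; apply/eqP => /esym.
have raf : ~~ (r %| a * f)%N.
  by rewrite Euclid_dvdM // negb_or ra -prime_coprime // coprime_sym.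
have ap0 : (0 < a * p)%N by rewrite muln_gt0 a0 prime_gt0.
have af0 : (0 < a * f)%N by rewrite muln_gt0 a0 f0.
apply: amicable_sigma.
- by rewrite muln_gt0 ap0 prime_gt0.
- by rewrite muln_gt0 af0 prime_gt0.
- by rewrite -sum_eq (sigma_mul_prime ap0 qp qap) (sigma_mul_prime a0 pp pa).
- rewrite -sum_eq (sigma_mul_prime af0 rp raf) (sigma_mul a0 f0) 1?coprime_sym //.
  by rewrite -ghf -xy -hx -gy; ring.
Qed.
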